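(* Let $t\ge 2$, let $n_1,\dots,n_t$ be positive integers, and let $G=K_{n_1,\dots,n_t}$ be the complete $t$-partite graph with partite sets $V_1,\dots,V_t$, $|V_i|=n_i$. Let $N_t=\{1,\dots,t\}$ and $f(I)=\sum_{i\in I}n_i$ for $I\subseteq N_t$. Let $p$ be a positive integer with $f(N_t)>p$. Then for every optimal $\gamma_p(G)$-set $D$ and every $i\in N_t\setminus I_D$, $$\left\lceil\frac{p-f(I_D)}{t-|I_D|-1}\right\rceil\le n_i.$$
   Context: A set $S\subseteq V(G)$ is a $p$-dominating set of $G$ if every vertex $v\in V(G)\setminus S$ has at least $p$ neighbors in $S$. The $p$-domination number $\gamma_p(G)$ is the minimum cardinality of a $p$-dominating set of $G$, and a $\gamma_p(G)$-set is a $p$-dominating set of cardinality $\gamma_p(G)$. For $D\subseteq V(G)$ write $D_i=V_i\cap D$ for $i\in N_t$ and $I_D=\{i\in N_t: |D_i|=|V_i|\}$. For a $\gamma_p(G)$-set $D$ with $|I_D|<t$ define $$\mu(D)=\sum_{i\in N_t\setminus I_D}\left|\,|D_i|-\frac{|D|-f(I_D)}{t-|I_D|}\right|.$$ A $\gamma_p(G)$-set $D$ is optimal if: (1) $f(I_D)<p$; (2) $|I_D|\ge |I_S|$ for every $\gamma_p(G)$-set $S$; (3) $\mu(D)\le\mu(S)$ for every $\gamma_p(G)$-set $S$ with $I_S=I_D$. *)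

From mathcomp Require Import all_boot all_order all_algebra.
Set Implicit Arguments. Unset Strict Implicit. Unset Printing Implicit Defensive.
Import Order.TTheory GRing.Theory Num.Theory.

(* Complete t-partite graph K_{n_0,...,n_{t-1}}: vertices are pairs (i, j) with
   i : 'I_t the part index and j : 'I_(n i); V_i = vertices with tag i. *)
Section Multipartite.
Variables (t : nat) (n : 'I_t -> nat).

Definition vert := {i : 'I_t & 'I_(n i)}.

Definition adj (x y : vert) : bool := tag x != tag y.

Definition part (i : 'I_t) : {set vert} := [set x : vert | tag x == i].

Definition p_dominating (p : nat) (S : {set vert}) : Prop :=
  forall v : vert, v \notin S -> p <= #|[set u in S | adj u v]|.

Definition gamma_p_set (p : nat) (D : {set vert}) : Prop :=
  p_dominating p D /\ (forall S, p_dominating p S -> #|D| <= #|S|).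

Definition Dpart (D : {set vert}) (i : 'I_t) : {set vert} := D :&: part i.

Definition fI (I : {set 'I_t}) : nat := \sum_(i in I) n i.

Definition ID (D : {set vert}) : {set 'I_t} :=
  [set i | #|Dpart D i| == #|part i|].

Definition mu (D : {set vert}) : rat :=
  \sum_(i in ~: ID D)
    `| (#|Dpart D i|)%:R -
       (((#|D|)%:R - (fI (ID D))%:R) / (t - #|ID D|)%:R) |%R.

Definition optimal (p : nat) (D : {set vert}) : Prop :=
  [/\ gamma_p_set p D, #|ID D| < t, fI (ID D) < p,
      (forall S, gamma_p_set p S -> #|ID S| <= #|ID D|) &
      (forall S, gamma_p_set p S -> ID S = ID D -> (mu D <= mu S)%R)].

End Multipartite.

(* If some non-full part V_i of an optimal gamma_p-set D had n_i < p - f(I_D),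
   then D, which has at least p vertices outside V_i, would have more than
   n_i - |D_i| vertices in the non-full parts other than V_i.  Trading that many
   of them for the missing vertices of V_i gives a set of the same size which is
   still p-dominating (outside vertices only lose neighbours in their own part)
   and in which V_i is full as well, contradicting the maximality of |I_D|.
   Hence p - f(I_D) <= n_i, and the ceiling bound follows a fortiori (when
   t - |I_D| = 1 the division by 0 makes the left-hand side 0). *)
From mathcomp Require Import all_boot all_order all_algebra zify.
Import Order.TTheory GRing.Theory Num.Theory.
Set Implicit Arguments. Unset Strict Implicit.

Lemma exists_subset_card (T : finType) (R : {set T}) m :
  m <= #|R| -> exists2 A : {set T}, A \subset R & #|A| = m.
Proof.
move=> leR; exists [set x in take m (enum R)].
  by apply/subsetP => x; rewrite inE => /mem_take; rewrite mem_enum.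
rewrite cardsE; move/card_uniqP: (take_uniq m (enum_uniq (mem R))) => ->.
by rewrite size_take -cardE; case: ltngtP leR => // ->.
Qed.

Section CeilDiv.
Local Open Scope ring_scope.

Lemma ceil_div_le (R : archiRealFieldType) (z b : int) (k : nat) :
  0 <= b -> z <= b -> Num.ceil (z%:~R / k%:R : R) <= b.
Proof.
move=> b_ge0 le_zb; rewrite ceil_le_int.
case: k => [|k]; first by rewrite invr0 mulr0 ler0z.
rewrite ler_pdivrMr ?ltr0n // -[k.+1%:R]/((k.+1 : int)%:~R) -intrM ler_int.
by apply: (le_trans le_zb); rewrite ler_peMr // lez_nat.
Qed.

End CeilDiv.

Section Multipartite.
Variables (t : nat) (n : 'I_t -> nat).
Implicit Types (S D : {set vert n}) (v : vert n).

Lemma card_part i : #|part n i| = n i.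
Proof.
have -> : part n i = [set Tagged (fun j => 'I_(n j)) k | k : 'I_(n i)].
  apply/setP => -[j k]; rewrite inE /=.
  apply/eqP/imsetP => [eji | [k' _ /(congr1 tag)] //].
  by subst j; exists k.
rewrite card_imset ?card_ord // => k k' /eqP.
by rewrite eq_Tagged => /eqP.
Qed.

Lemma card_Dpart_le S i : #|Dpart S i| <= n i.
Proof. by rewrite -(card_part i) subset_leq_card ?subsetIr. Qed.

Lemma in_ID S i : (i \in ID S) = (part n i \subset S).
Proof.
rewrite inE; apply/eqP/idP => [eqS | sub]; last by rewrite /Dpart (setIidPr sub).
by apply/setIidPr/eqP; rewrite eqEcard subsetIr -eqS leqnn.
Qed.

Lemma card_adj_set S v :
  #|[set u in S | adj u v]| = #|S| - #|Dpart S (tag v)|.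
Proof. by rewrite -cardsD; apply: eq_card => u; rewrite !inE andbC. Qed.

Lemma p_dominating_card p S i :
  p_dominating p S -> i \notin ID S -> p <= #|S| - #|Dpart S i|.
Proof.
rewrite in_ID => domS /subsetPn[v vi vS].
by move: (domS v vS) vi; rewrite card_adj_set inE => le_p /eqP <-.
Qed.

Lemma card_tag_in S (I : {set 'I_t}) :
  #|[set x in S | tag x \in I]| <= fI n I.
Proof.
rewrite -sum1_card (partition_big (fun x : vert n => tag x) (mem I)); last first.
  by move=> x; rewrite inE => /andP[].
apply: leq_sum => j _; rewrite sum1_card -(card_part j) subset_leq_card //.
by apply/subsetP => x; rewrite unfold_in inE => /andP[_ xj]; rewrite inE.
Qed.

Lemma p_dominating_transfer p D S :
  p_dominating p D -> #|D| <= #|S| ->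
  (forall v, v \notin S -> tag v \notin ID D /\ Dpart S (tag v) \subset Dpart D (tag v)) ->
  p_dominating p S.
Proof.
move=> domD leDS outS v vS; have [nfull sub] := outS v vS.
have := p_dominating_card domD nfull; have := subset_leq_card sub.
rewrite card_adj_set; lia.
Qed.

Section Exchange.
Variables (D A : {set vert n}) (i : 'I_t).
Hypotheses (AD : A \subset D) (A_tag : {in A, forall x, tag x \notin i |: ID D}).

Let S := (D :\: A) :|: part n i.

Lemma ID_exchange : i |: ID D \subset ID S.
Proof.
apply/subsetP => j j_in; rewrite in_ID; apply/subsetP => x xj.
case/setU1P: j_in => [eji | jD]; first by rewrite inE -eji xj orbT.
have xD : x \in D by move: jD; rewrite in_ID => /subsetP; apply.
rewrite !inE xD andbT; apply/orP; left; apply: contraT; rewrite negbK => /A_tag.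
by move: xj; rewrite inE => /eqP ->; rewrite setU1r.
Qed.

Lemma card_exchange : #|A| = n i - #|Dpart D i| -> #|S| = #|D|.
Proof.
move=> cardA; rewrite /S cardsU.
have -> : (D :\: A) :&: part n i = Dpart D i.
  apply/setP => x; rewrite !inE; case xi: (tag x == i); rewrite ?andbF // !andbT.
  case xA: (x \in A) => //=.
  by move: (A_tag xA); rewrite (eqP xi) setU11.
rewrite cardsD (setIidPr AD) card_part.
have := card_Dpart_le D i; have := subset_leq_card AD; lia.
Qed.

Lemma p_dominating_exchange p :
  p_dominating p D -> #|A| = n i - #|Dpart D i| -> p_dominating p S.
Proof.
move=> domD cardA; apply: (p_dominating_transfer domD); first by rewrite card_exchange.
move=> v vS; split.
  apply: contra vS => vfull.
  have: part n (tag v) \subset S by rewrite -in_ID (subsetP ID_exchange) // setU1r.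
  by move/subsetP; apply; rewrite inE.
have vi : tag v != i by apply: contra vS => /eqP vi; rewrite !inE vi eqxx orbT.
apply/subsetP => x; rewrite !inE => /andP[/orP[/andP[_ ->] //| xi] /eqP xv].
by move: vi; rewrite -xv (eqP xi) eqxx.
Qed.

End Exchange.

Lemma gamma_p_set_part_lb p D i :
  gamma_p_set p D -> (forall S, gamma_p_set p S -> #|ID S| <= #|ID D|) ->
  i \notin ID D -> p - fI n (ID D) <= n i.
Proof.
move=> [domD minD] maxID iD; rewrite leqNgt; apply/negP => lt_ni.
set R := [set x in D | tag x \notin i |: ID D].
have cover : #|D| <= #|R| + fI n (ID D) + #|Dpart D i|.
  apply: (@leq_trans #|R :|: [set x in D | tag x \in ID D] :|: Dpart D i|).
    apply: subset_leq_card; apply/subsetP => x xD; rewrite !inE xD /=.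
    by case: (tag x == i); case: (#|_| == _).
  apply: leq_trans (leq_card_setU _ _) _; rewrite leq_add2r.
  by apply: leq_trans (leq_card_setU _ _) _; rewrite leq_add2l card_tag_in.
have cardR : n i - #|Dpart D i| <= #|R|.
  by have := p_dominating_card domD iD; lia.
have [A AR cardA] := exists_subset_card cardR.
have AD : A \subset D by apply: subset_trans AR _; apply/subsetP => x /setIdP[].
have A_tag : {in A, forall x, tag x \notin i |: ID D}.
  by move=> x /(subsetP AR) /setIdP[].
have exchange_gamma : gamma_p_set p ((D :\: A) :|: part n i).
  split; first exact: p_dominating_exchange.
  by move=> S /minD; rewrite card_exchange.
have := maxID _ exchange_gamma; have := subset_leq_card (ID_exchange A_tag).
rewrite cardsU1 iD add1n => lt_ID le_ID.
by have := leq_trans lt_ID le_ID; rewrite ltnn.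
Qed.

End Multipartite.

Theorem lemma7 (t : nat) (n : 'I_t -> nat) (p : nat)
  (ht : 2 <= t) (hn : forall i, 0 < n i) (hp : 0 < p)
  (hf : p < fI n [set: 'I_t]) (D : {set vert n}) (hD : optimal p D) :
  forall i : 'I_t, i \notin ID D ->
    (Num.ceil (((p%:Z - (fI n (ID D))%:Z)%:~R : rat)
               / ((t - #|ID D| - 1)%:R : rat)) <= (n i)%:Z)%R.
Proof.
case: hD => [gammaD _ _ maxID _] i iD; apply: ceil_div_le => //.
have := gamma_p_set_part_lb gammaD maxID iD; lia.
Qed.
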